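(* Let $G$ be a finite group acting cellularly on $K$, and hence on $\operatorname{Sec}(\pi^{\mathrm{sk}})$. Then the groupoid of $G$-equivariant Stokes cocycles on $K$ is canonically equivalent to the homotopy fixed point groupoid $\operatorname{Sec}(\pi^{\mathrm{sk}})^{hG}$.
   Context: Setting: $N^\circ$ is a regular punctured collar (walls removed) of the boundary over a reduced SNC divisor $D$ in a level-$n$ Kummer Kato–Nakayama space, with Stokes input (finite index set $\Phi$, graded local system $\mathrm{Gr}=\bigoplus_{q\in\Phi}\mathrm{Gr}_q$, locally constant preorders) and Stokes sheaf $\mathrm{St}_\Phi$ (automorphisms of $\mathrm{Gr}$ preserving the standard filtrations $\bigoplus_{q'\preceq q}\mathrm{Gr}_{q'}$ and inducing the identity on graded pieces). $\Sigma_{D,\Phi,n}$ is the common refinement of the SNC-depth and Stokes-wall stratifications of $N^\circ$; on each stratum $S$, $\mathrm{St}_\Phi$ is locally constant, and $\mathrm{St}_\Phi(S)$ denotes its group of sections over a contractible open of $S$. $K$ is a locally finite CW decomposition of $N^\circ$ adapted to $\Sigma_{D,\Phi,n}$ (every open cell lies in a unique stratum; $S(c)$ is the stratum of a cell $c$). $\Pi_1^{\mathrm{sk}}(K)$ is the groupoid on the vertices generated by oriented $1$-cells (with inverses) subject to the relations from $2$-cells. $\mathcal G_C^{\mathrm{sk}}$ has the same objects and is generated by $(e,u)$, $e$ an oriented edge, $u\in\mathrm{St}_\Phi(S(e))$, with labels multiplying along compositions and $2$-cell relations; $\pi^{\mathrm{sk}}:\mathcal G_C^{\mathrm{sk}}\to\Pi_1^{\mathrm{sk}}(K)$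 forgets labels. A strict section of $\pi^{\mathrm{sk}}$ is equivalently a choice of labels $u_e\in\mathrm{St}_\Phi(S(e))$ on oriented $1$-cells satisfying the $2$-cell relations, and natural isomorphisms are vertex gauges; $\operatorname{Sec}(\pi^{\mathrm{sk}})$ is the groupoid of these. $G$ acts on $K$ by cellular maps and on the Stokes data by pullback, writing $g(u)$ for the transported element. A $G$-equivariant Stokes cocycle on $K$ is a cocycle $(u_e)$ for $\pi^{\mathrm{sk}}$ together with elements $a_g(v)\in\mathrm{St}_\Phi(S(v))$ for every $g\in G$ and vertex $v$ such that $u_{g\cdot e}=a_g(w)\,g(u_e)\,a_g(v)^{-1}$ for every oriented $1$-cell $e:v\to w$ and $g\in G$, and $a_{gh}(v)=a_g(v)\,g(a_h(v))$ for all $g,h$ and vertices $v$; morphisms are vertex gauges $h(v)\in\mathrm{St}_\Phi(S(v))$ transforming $(u_e,a_g(v))$ into $(u'_e,a'_g(v))$ by the usual conjugation. For a finite group $G$ acting on a groupoid $\mathcal C$ by strict autoequivalences, $\mathcal C^{hG}$ is the groupoid of objects $x$ with isomorphisms $\varphi_g:g\cdot x\to x$ such that $\varphi_1=\mathrm{id}$, $\varphi_{gh}=\varphi_g\circ g(\varphi_h)$, with morphisms $f$ satisfying $f\varphi_g=\varphi'_g g(f)$. *)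

From mathcomp Require Import all_boot all_fingroup.

Unset Implicit Arguments.
Unset Strict Implicit.
Unset Printing Implicit Defensive.

Local Open Scope group_scope.

(* Abstract (possibly infinite) groups: the Stokes groups St_Phi(S).  *)
Record Grp := {
  gcar :> Type;
  gmul : gcar -> gcar -> gcar;
  gone : gcar;
  ginv : gcar -> gcar;
  gmulA : forall x y z, gmul x (gmul y z) = gmul (gmul x y) z;
  gmul1l : forall x, gmul gone x = x;
  gmul1r : forall x, gmul x gone = x;
  gmulVl : forall x, gmul (ginv x) x = gone;
  gmulVr : forall x, gmul x (ginv x) = gone }.

Arguments gmul {g}.
Arguments gone {g}.
Arguments ginv {g}.

Definition ghom {A B : Grp} (f : A -> B) : Prop :=
  forall x y, f (gmul x y) = gmul (f x) (f y).

(* Combinatorial data: the 2-skeleton of the CW decomposition K of    *)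
(* N°, adapted to Sigma_{D,Phi,n}, with the Stokes groups of the      *)
(* strata, the restriction (generization) maps between adjacent cells,*)
(* and a cellular action of the finite group gT together with the     *)
(* pullback action on Stokes data.                                    *)
(*  - V : vertices, E : 1-cells (each with a chosen orientation       *)
(*    src e -> tgt e), F : 2-cells, bnd f : boundary loop of f as a   *)
(*    word in oriented 1-cells ((e,false) = e, (e,true) = e reversed).*)
(*  - resVE v e / resEF e f : restriction of sections from (a         *)
(*    neighbourhood of) a face to the adjacent higher cell.          *)
(*  - actV/actE/actF : the cellular action; flipE g e records whether *)
(*    g reverses the chosen orientation of e.                        *)
Record StokesCW (gT : finGroupType) := {
  V : Type; E : Type; F : Type;
  src : E -> V; tgt : E -> V;
  bnd : F -> seq (E * bool);
  Str : Type;
  SV : V -> Str; SE : E -> Str; SF : F -> Str;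
  St : Str -> Grp;
  resVE : forall v e, St (SV v) -> St (SE e);
  resEF : forall e f, St (SE e) -> St (SF f);
  resVE_hom : forall v e, ghom (resVE v e);
  resEF_hom : forall e f, ghom (resEF e f);
  actV : gT -> V -> V; actE : gT -> E -> E; actF : gT -> F -> F;
  flipE : gT -> E -> bool;
  actV1 : forall v, actV 1 v = v;
  actVM : forall g h v, actV (g * h) v = actV g (actV h v);
  actE1 : forall e, actE 1 e = e;
  actEM : forall g h e, actE (g * h) e = actE g (actE h e);
  actF1 : forall f, actF 1 f = f;
  actFM : forall g h f, actF (g * h) f = actF g (actF h f);
  flipE1 : forall e, flipE 1 e = false;
  flipEM : forall g h e, flipE (g * h) e = flipE h e (+) flipE g (actE h e);
  src_act : forall g e,
    src (actE g e) = if flipE g e then actV g (tgt e) else actV g (src e);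
  tgt_act : forall g e,
    tgt (actE g e) = if flipE g e then actV g (src e) else actV g (tgt e);
  pullV : forall g v, St (SV (actV g v)) -> St (SV v);
  pullE : forall g e, St (SE (actE g e)) -> St (SE e);
  pullF : forall g f, St (SF (actF g f)) -> St (SF f);
  pullV_hom : forall g v, ghom (pullV g v);
  pullE_hom : forall g e, ghom (pullE g e);
  pullF_hom : forall g f, ghom (pullF g f);
  pullV1 : forall v (x : St (SV (actV 1 v))),
    pullV 1 v x = eq_rect _ (fun w => St (SV w)) x _ (actV1 v);
  pullE1 : forall e (x : St (SE (actE 1 e))),
    pullE 1 e x = eq_rect _ (fun w => St (SE w)) x _ (actE1 e);
  pullF1 : forall f (x : St (SF (actF 1 f))),
    pullF 1 f x = eq_rect _ (fun w => St (SF w)) x _ (actF1 f);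
  pullVM : forall g h v (x : St (SV (actV g (actV h v)))),
    pullV (g * h) v (eq_rect _ (fun w => St (SV w)) x _ (esym (actVM g h v)))
    = pullV h v (pullV g (actV h v) x);
  pullEM : forall g h e (x : St (SE (actE g (actE h e)))),
    pullE (g * h) e (eq_rect _ (fun w => St (SE w)) x _ (esym (actEM g h e)))
    = pullE h e (pullE g (actE h e) x);
  pullFM : forall g h f (x : St (SF (actF g (actF h f)))),
    pullF (g * h) f (eq_rect _ (fun w => St (SF w)) x _ (esym (actFM g h f)))
    = pullF h f (pullF g (actF h f) x);
  resVE_pull : forall g v e (x : St (SV (actV g v))),
    resVE v e (pullV g v x) = pullE g e (resVE (actV g v) (actE g e) x);
  resEF_pull : forall g e f (x : St (SE (actE g e))),
    resEF e f (pullE g e x) = pullF g f (resEF (actE g e) (actF g f) x)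
}.

Arguments V {gT}. Arguments E {gT}. Arguments F {gT}.
Arguments src {gT}. Arguments tgt {gT}. Arguments bnd {gT}.
Arguments SV {gT}. Arguments SE {gT}. Arguments SF {gT}. Arguments St {gT}.
Arguments resVE {gT}. Arguments resEF {gT}.
Arguments actV {gT}. Arguments actE {gT}. Arguments actF {gT}.
Arguments flipE {gT}. Arguments pullV {gT}. Arguments pullE {gT}.

Section Stokes.
Variables (gT : finGroupType) (K : StokesCW gT).

(* Labellings of oriented 1-cells (candidate strict sections of pi^sk) *)
Definition Labels := forall e : E K, St K (SE K e).
Definition Gauge := forall v : V K, St K (SV K v).

Definition face_lab (u : Labels) (f : F K) (eb : E K * bool) : St K (SF K f) :=
  let y := resEF K eb.1 f (u eb.1) in if eb.2 then ginv y else y.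

(* product of labels along a path e1 e2 ... ek (composition: uk ... u1) *)
Fixpoint path_prod (u : Labels) (f : F K) (s : seq (E K * bool))
  (acc : St K (SF K f)) : St K (SF K f) :=
  match s with
  | [::] => acc
  | eb :: s' => path_prod u f s' (gmul (face_lab u f eb) acc)
  end.

(* strict section of pi^sk = labelling satisfying the 2-cell relations *)
Definition cocycle (u : Labels) : Prop :=
  forall f : F K, path_prod u f (bnd K f) gone = gone.

Definition gauge_rel (u u' : Labels) (h : Gauge) : Prop :=
  forall e : E K,
    u' e = gmul (gmul (resVE K (tgt K e) e (h (tgt K e))) (u e))
                (ginv (resVE K (src K e) e (h (src K e)))).

Definition gactU (g : gT) (u : Labels) : Labels := fun e =>
  let y := pullE K g^-1 e (u (actE K g^-1 e)) in
  if flipE K g^-1 e then ginv y else y.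

Definition gactH (g : gT) (h : Gauge) : Gauge := fun v =>
  pullV K g^-1 v (h (actV K g^-1 v)).

Definition gcomp (h k : Gauge) : Gauge := fun v => gmul (h v) (k v).
Definition gid : Gauge := fun v => gone.

Record EqCocycle := {
  ec_u : Labels;
  ec_a : gT -> Gauge;
  ec_coc : cocycle ec_u;
  ec_rel : forall g (e : E K),
    ec_u e = gmul (gmul (resVE K (tgt K e) e (ec_a g (tgt K e))) (gactU g ec_u e))
                  (ginv (resVE K (src K e) e (ec_a g (src K e))));
  ec_mul : forall g h (v : V K),
    ec_a (g * h) v = gmul (ec_a g v) (gactH g (ec_a h) v) }.

Definition eqc_hom (c c' : EqCocycle) (h : Gauge) : Prop :=
  gauge_rel (ec_u c) (ec_u c') h /\
  forall g (v : V K),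
    ec_a c' g v = gmul (gmul (h v) (ec_a c g v)) (ginv (gactH g h v)).

End Stokes.

Arguments Labels {gT} K. Arguments Gauge {gT} K.
Arguments face_lab {gT K}. Arguments path_prod {gT K}.
Arguments cocycle {gT K}. Arguments gauge_rel {gT K}.
Arguments gactU {gT K}. Arguments gactH {gT K}.
Arguments gcomp {gT K}. Arguments gid {gT} K.
Arguments EqCocycle {gT} K. Arguments ec_u {gT K}. Arguments ec_a {gT K}.
Arguments eqc_hom {gT K}.

(* Concrete groupoids: objects, a type of morphism data, and the      *)
(* predicate "m is a morphism x -> y"; comp m n = m o n.              *)
Record CGrpd := {
  Ob : Type; Mor : Type;
  hom : Ob -> Ob -> Mor -> Prop;
  comp : Mor -> Mor -> Mor;
  idm : Mor }.

Arguments hom {c}. Arguments comp {c}. Arguments idm {c}.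

Record CGAct (gT : finGroupType) (C : CGrpd) := {
  actO : gT -> Ob C -> Ob C;
  actM : gT -> Mor C -> Mor C }.

Arguments actO {gT C}. Arguments actM {gT C}.


Section HomotopyFixedPoints.
Variables (gT : finGroupType) (C : CGrpd) (A : CGAct gT C).

Record hGOb := {
  hx : Ob C;
  hphi : gT -> Mor C;
  hphi_hom : forall g, hom (actO A g hx) hx (hphi g);
  hphi1 : hphi 1 = idm;
  hphiM : forall g h, hphi (g * h) = comp (hphi g) (actM A g (hphi h)) }.

Definition hG_hom (X Y : hGOb) (f : Mor C) : Prop :=
  hom (hx X) (hx Y) f /\
  forall g, comp f (hphi X g) = comp (hphi Y g) (actM A g f).

Definition hG : CGrpd :=
  {| Ob := hGOb; Mor := Mor C; hom := hG_hom; comp := @comp C; idm := @idm C |}.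

End HomotopyFixedPoints.

Arguments hGOb {gT C}. Arguments hx {gT C A}. Arguments hphi {gT C A}.
Arguments hG {gT C}.

Definition is_equivalence (C D : CGrpd) (FO : Ob C -> Ob D) (FM : Mor C -> Mor D)
  : Prop :=
  (forall x y m, hom x y m -> hom (FO x) (FO y) (FM m)) /\
  (forall x y z m n, hom x y n -> hom y z m -> FM (comp m n) = comp (FM m) (FM n)) /\
  (FM idm = idm) /\
  (forall x y m', hom (FO x) (FO y) m' ->
     exists m, (hom x y m /\ FM m = m') /\
               forall m2, hom x y m2 /\ FM m2 = m' -> m2 = m) /\
  (* essentially surjective (every morphism of a groupoid is invertible) *)
  (forall y, exists x m, hom (FO x) y m).

Section Groupoids.
Variables (gT : finGroupType) (K : StokesCW gT).

Definition SecGrpd : CGrpd :=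
  {| Ob := {u : Labels K | cocycle u}; Mor := Gauge K;
     hom := fun x y h => gauge_rel (sval x) (sval y) h;
     comp := @gcomp _ K; idm := gid K |}.

(* the induced G-action on Sec(pi^sk); Hact: transport preserves the *)
(* 2-cell relations (G acts cellularly)                               *)
Definition SecAct (Hact : forall g u, cocycle u -> cocycle (gactU g u))
  : CGAct gT SecGrpd :=
  {| actO := fun g (x : Ob SecGrpd) =>
       (exist _ (gactU g (sval x)) (Hact g _ (svalP x)) : Ob SecGrpd);
     actM := fun g (h : Mor SecGrpd) => (gactH g h : Mor SecGrpd) |}.

Definition EqCocGrpd : CGrpd :=
  {| Ob := EqCocycle K; Mor := Gauge K; hom := @eqc_hom _ K;
     comp := @gcomp _ K; idm := gid K |}.

End Groupoids.

Arguments SecGrpd {gT} K. Arguments SecAct {gT K}. Arguments EqCocGrpd {gT} K.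

From Stdlib Require Import FunctionalExtensionality.
From mathcomp Require Import all_boot all_fingroup.

(** An equivariant Stokes cocycle [(u, a)] is literally a homotopy fixed
    point of [Sec(pi^sk)]: the equivariance condition says that [a g] is a
    gauge from [g.u] to [u], and [a (g h) = a g * g(a h)] is the cocycle
    condition of [C^hG].  The normalisation [phi 1 = id] is not imposed on
    [a] but is automatic, because [a 1 = a 1 * a 1].  Likewise the
    transformation rule [a' g = h . a g . g(h)^-1] of morphisms is the
    naturality square of [C^hG], so the comparison functor is the identity
    on gauges; it is fully faithful, and every homotopy fixed point is
    reached, up to the identity gauge, by the cocycle with the same data. *)

Local Open Scope group_scope.

Section GrpTheory.
Variable G : Grp.
Implicit Types x y z : G.

Lemma gmulI x : injective (gmul x).
Proof.
by move=> y z Hyz; rewrite -(gmul1l _ y) -(gmul1l _ z) -(gmulVl _ x) -!gmulA Hyz.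
Qed.

Lemma gidem_eq1 x : gmul x x = x -> x = gone.
Proof. by move=> Hxx; apply: (@gmulI x); rewrite gmul1r. Qed.

Lemma ginv1 : ginv (gone : G) = gone.
Proof. by rewrite -(gmul1l _ (ginv _)) gmulVr. Qed.

Lemma eq_gmulV x y z : x = gmul y (ginv z) <-> y = gmul x z.
Proof.
by split=> ->; rewrite -gmulA ?gmulVl ?gmulVr gmul1r.
Qed.

End GrpTheory.

Lemma ghom1 {A B : Grp} {f : A -> B} : ghom f -> f gone = gone.
Proof. by move=> fM; apply: gidem_eq1; rewrite -fM gmul1l. Qed.

Lemma eq_rect_section (A : Type) (P : A -> Type) (s : forall a, P a)
    (a b : A) (p : a = b) :
  eq_rect a P (s a) b p = s b.
Proof. by case: _ / p. Qed.

Section EquivariantCocycles.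
Variables (gT : finGroupType) (K : StokesCW gT).

Lemma gactH1 (h : Gauge K) : gactH 1 h = h.
Proof.
apply: functional_extensionality_dep => v.
by rewrite /gactH invg1 pullV1 (eq_rect_section _ (fun w => St K (SV K w))).
Qed.

Lemma gactH_gid g : gactH g (gid K) = gid K.
Proof.
apply: functional_extensionality_dep => v.
exact/ghom1/pullV_hom.
Qed.

Lemma gcomp1h (h : Gauge K) : gcomp (gid K) h = h.
Proof. by apply: functional_extensionality_dep => v; apply: gmul1l. Qed.

Lemma gcomph1 (h : Gauge K) : gcomp h (gid K) = h.
Proof. by apply: functional_extensionality_dep => v; apply: gmul1r. Qed.

Lemma gauge_rel_gid (u : Labels K) : gauge_rel u u (gid K).
Proof.
move=> e; rewrite /gid !(ghom1 (resVE_hom _ K _ e)).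
by rewrite gmul1l ginv1 gmul1r.
Qed.

Lemma ec_a1 (c : EqCocycle K) : ec_a c 1 = gid K.
Proof.
apply: functional_extensionality_dep => v.
have := ec_mul _ _ c 1 1 v; rewrite mulg1 gactH1 => a1_idem.
exact/gidem_eq1/esym.
Qed.

Lemma ec_aM (c : EqCocycle K) g h :
  ec_a c (g * h) = gcomp (ec_a c g) (gactH g (ec_a c h)).
Proof. by apply: functional_extensionality_dep => v; apply: ec_mul. Qed.

Variable Hact : forall (g : gT) (u : Labels K), cocycle u -> cocycle (gactU g u).

Definition hfp_of_eqcocycle (c : EqCocycle K) : hGOb (SecAct Hact) :=
  @Build_hGOb gT (SecGrpd K) (SecAct Hact)
    (exist _ (ec_u c) (ec_coc _ _ c)) (ec_a c)
    (fun g => ec_rel _ _ c g) (ec_a1 c) (ec_aM c).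

Definition eqcocycle_of_hfp (Y : hGOb (SecAct Hact)) : EqCocycle K :=
  {| ec_u := sval (hx Y); ec_a := hphi Y; ec_coc := svalP (hx Y);
     ec_rel := hphi_hom _ _ _ Y;
     ec_mul := fun g h v => f_equal (fun k => k v) (hphiM _ _ _ Y g h) |}.

Lemma eqc_homE (c c' : EqCocycle K) (f : Gauge K) :
  eqc_hom c c' f <->
  hG_hom _ _ (SecAct Hact) (hfp_of_eqcocycle c) (hfp_of_eqcocycle c') f.
Proof.
split=> -[f_gauge f_nat]; split=> // g.
- by apply: functional_extensionality_dep => v; apply/eq_gmulV/f_nat.
- by move=> v; apply/eq_gmulV; apply: (f_equal (fun k => k v) (f_nat g)).
Qed.

Lemma hfp_of_eqcocycleK (Y : hGOb (SecAct Hact)) :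
  hG_hom _ _ (SecAct Hact) (hfp_of_eqcocycle (eqcocycle_of_hfp Y)) Y (gid K).
Proof.
split; first exact: gauge_rel_gid.
by move=> g /=; rewrite gactH_gid gcomp1h gcomph1.
Qed.

End EquivariantCocycles.

Theorem proposition9p8 (gT : finGroupType) (K : StokesCW gT)
  (Hact : forall (g : gT) (u : Labels K), cocycle u -> cocycle (gactU g u)) :
  exists FO : Ob (EqCocGrpd K) -> Ob (hG (SecAct Hact)),
    @is_equivalence (EqCocGrpd K) (hG (SecAct Hact))
      FO (fun h : Mor (EqCocGrpd K) => (h : Mor (hG (SecAct Hact)))) /\
    (forall c : Ob (EqCocGrpd K), sval (hx (FO c)) = ec_u c).
Proof.
exists (hfp_of_eqcocycle _ _ Hact); split=> //.
split; [|split; [by []|split; [by []|split]]].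
- by move=> c c' f f_hom; apply/eqc_homE.
- move=> c c' f f_hom; exists f; split; first by split=> //; apply/eqc_homE.
  by move=> f' [_ ->].
- by move=> Y; exists (eqcocycle_of_hfp _ _ Hact Y), (gid K);
    apply: hfp_of_eqcocycleK.
Qed.
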